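(* Suppose that for every metric space $M$ and every point $s\in M$ there exists a competitive deterministic online algorithm for the infinite server problem on $(M,s)$. Then there exists a universal constant $\rho$ such that for every metric space $M$ and every $s\in M$ the infinite server problem on $(M,s)$ admits a strictly $\rho$-competitive deterministic online algorithm.
   Context: Infinite server problem on $(M,s)$: $M$ is a metric space with metric $d$ and $s\in M$ is the source. An unbounded number of servers initially reside at $s$. A finite sequence of requests (points of $M$) is revealed one by one; each request must be served immediately, before the next one is revealed, by moving some server to the requested point. The cost is the total distance traveled by all servers. For an algorithm $ALG$ and request sequence $\sigma$, $ALG(\sigma)$ denotes its cost and $OPT(\sigma)$ the optimal offline cost. An online algorithm is $\rho$-competitive ($\rho\ge1$) if there is a constant $c$ independent of $\sigma$ with $ALG(\sigma)\le\rho\, OPT(\sigma)+c$ for all $\sigma$; it is strictly $\rho$-competitive if this holds with $c=0$. An algorithm is competitive if it is $\rho$-competitive for some $\rho$. *)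

From Stdlib Require Import Reals List.
Import ListNotations.
Open Scope R_scope.

Section InfiniteServer.
Variable M : Metric_Space.
Notation P := (Base M).
Notation d := (dist M).

(* Servers are indexed by [nat] (unboundedly many); a configuration gives the
   position of every server. *)
Definition config := nat -> P.

Definition init_config (s : P) : config := fun _ => s.

Definition move := (nat * P)%type.

Definition upd (c : config) (i : nat) (x : P) : config :=
  fun j => if Nat.eqb j i then x else c j.

Fixpoint exec (c : config) (ms : list move) : config * R :=
  match ms with
  | [] => (c, 0)
  | (i, x) :: ms' =>
      let r := exec (upd c i x) ms' in (fst r, d (c i) x + snd r)
  end.

Definition served (c : config) (x : P) : Prop := exists i, c i = x.

(* A deterministic online algorithm: given the past requests (in order) and
   the current request, it chooses the moves to perform now. *)
Definition online_alg := list P -> P -> list move.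

Fixpoint alg_valid_from (A : online_alg) (hist : list P) (c : config)
    (sigma : list P) : Prop :=
  match sigma with
  | [] => True
  | r :: sigma' =>
      let c' := fst (exec c (A hist r)) in
      served c' r /\ alg_valid_from A (hist ++ [r]) c' sigma'
  end.

Fixpoint alg_cost_from (A : online_alg) (hist : list P) (c : config)
    (sigma : list P) : R :=
  match sigma with
  | [] => 0
  | r :: sigma' =>
      let e := exec c (A hist r) in
      snd e + alg_cost_from A (hist ++ [r]) (fst e) sigma'
  end.

(* The algorithm serves every request sequence (each request served
   immediately, before the next one is revealed). *)
Definition serves_all (s : P) (A : online_alg) : Prop :=
  forall sigma, alg_valid_from A [] (init_config s) sigma.

Definition alg_cost (s : P) (A : online_alg) (sigma : list P) : R :=
  alg_cost_from A [] (init_config s) sigma.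

(* An offline schedule: one list of moves per request, chosen knowing the
   whole sequence. *)
Fixpoint sched_valid (c : config) (sigma : list P) (S : list (list move))
    : Prop :=
  match sigma, S with
  | [], [] => True
  | r :: sigma', m :: S' =>
      let c' := fst (exec c m) in served c' r /\ sched_valid c' sigma' S'
  | _, _ => False
  end.

Fixpoint sched_cost (c : config) (S : list (list move)) : R :=
  match S with
  | [] => 0
  | m :: S' => let e := exec c m in snd e + sched_cost (fst e) S'
  end.

(* ALG(sigma) <= rho * OPT(sigma) + c, where OPT(sigma) is the infimum of the
   costs of all valid offline schedules; since rho >= 0 this is equivalent to
   the bound holding against every valid offline schedule. *)
Definition bounded_by (s : P) (A : online_alg) (rho cst : R) : Prop :=
  forall (sigma : list P) (S : list (list move)),
    sched_valid (init_config s) sigma S ->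
    alg_cost s A sigma <= rho * sched_cost (init_config s) S + cst.

Definition rho_competitive (s : P) (A : online_alg) (rho : R) : Prop :=
  1 <= rho /\ exists cst : R, bounded_by s A rho cst.

Definition strictly_rho_competitive (s : P) (A : online_alg) (rho : R) : Prop :=
  1 <= rho /\ bounded_by s A rho 0.

Definition competitive (s : P) (A : online_alg) : Prop :=
  exists rho : R, rho_competitive s A rho.

End InfiniteServer.

From Stdlib Require Import Reals List Lra FunctionalExtensionality ProofIrrelevance ClassicalEpsilon Classical.
Import ListNotations.
Open Scope R_scope.

(* Suppose no uniform ratio exists, and for every n pick a pointed space
   (M_n, s_n) admitting no strictly (n+1)-competitive algorithm.  Glue the
   copies of M_n with distances scaled by k+1, for all n and k, at their
   sources into one wedge.  A competitive algorithm on the wedge, with ratio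
   rho and additive constant c, restricts to each branch; on the copy of M_n
   scaled by k+1 it is, after rescaling, rho-competitive on M_n with additive
   constant c/(k+1).  Serving requests at
   s_n for free until the first request x <> s_n, and from then on running the
   copy with c/(k+1) <= d(s_n, x) <= OPT, gives a strictly (rho+1)-competitive
   algorithm on M_n: a contradiction as soon as n >= rho. *)

Lemma dist_self (M : Metric_Space) (x : Base M) : dist M x x = 0.
Proof. apply dist_refl; reflexivity. Qed.

Section Exec.
Variable M : Metric_Space.

Lemma exec_cost_nonneg (c : config M) ms : 0 <= snd (exec M c ms).
Proof.
  revert c; induction ms as [|[i x] ms IH]; intros c; simpl; [lra|].
  pose proof (dist_pos M (c i) x); specialize (IH (upd M c i x)); lra.
Qed.

Lemma exec_displacement_le (c : config M) ms i :
  dist M (c i) (fst (exec M c ms) i) <= snd (exec M c ms).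
Proof.
  revert c; induction ms as [|[j x] ms IH]; intros c; simpl.
  - rewrite dist_self; lra.
  - specialize (IH (upd M c j x)); unfold upd in IH at 1.
    destruct (Nat.eqb i j) eqn:Eij.
    + apply Nat.eqb_eq in Eij; subst j.
      pose proof (dist_tri M (c i) (fst (exec M (upd M c i x) ms) i) x); lra.
    + pose proof (dist_pos M (c j) x); lra.
Qed.

Lemma exec_app (c : config M) ms1 ms2 :
  exec M c (ms1 ++ ms2) =
  (fst (exec M (fst (exec M c ms1)) ms2),
   snd (exec M c ms1) + snd (exec M (fst (exec M c ms1)) ms2)).
Proof.
  revert c; induction ms1 as [|[i x] ms1 IH]; intros c; simpl.
  - destruct (exec M c ms2); simpl; f_equal; ring.
  - rewrite IH; simpl; f_equal; ring.
Qed.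

Lemma sched_cost_nonneg (c : config M) S : 0 <= sched_cost M c S.
Proof.
  revert c; induction S as [|ms S IH]; intros c; simpl; [lra|].
  pose proof (exec_cost_nonneg c ms); specialize (IH (fst (exec M c ms))); lra.
Qed.

Lemma sched_cost_ge_first_request (s x : Base M) rest S :
  sched_valid M (init_config M s) (x :: rest) S -> dist M s x <= sched_cost M (init_config M s) S.
Proof.
  destruct S as [|ms S]; simpl; [contradiction|]; intros [[i Hi] _].
  pose proof (exec_displacement_le (init_config M s) ms i) as H; rewrite Hi in H.
  pose proof (sched_cost_nonneg (fst (exec M (init_config M s) ms)) S); unfold init_config in H at 1; lra.
Qed.

Lemma bounded_by_mono (s : Base M) (A : online_alg M) rho rho' cst :
  rho <= rho' -> bounded_by M s A rho cst -> bounded_by M s A rho' cst.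
Proof.
  intros Hle Hb sigma S HS.
  pose proof (Hb sigma S HS); pose proof (sched_cost_nonneg (init_config M s) S); nra.
Qed.

Lemma alg_run_congr (A A' : online_alg M) hist hist' :
  (forall h r, A (hist ++ h) r = A' (hist' ++ h) r) ->
  forall c sigma,
    alg_cost_from M A hist c sigma = alg_cost_from M A' hist' c sigma /\
    (alg_valid_from M A hist c sigma <-> alg_valid_from M A' hist' c sigma).
Proof.
  intros HA c sigma; revert hist hist' HA c.
  induction sigma as [|r sigma IH]; intros hist hist' HA c; simpl; [split; tauto|].
  assert (Hr : A hist r = A' hist' r) by (rewrite <- (app_nil_r hist), <- (app_nil_r hist'); apply HA).
  rewrite Hr.
  assert (HA' : forall h r', A ((hist ++ [r]) ++ h) r' = A' ((hist' ++ [r]) ++ h) r')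
    by (intros; rewrite <- !app_assoc; apply HA).
  destruct (IH _ _ HA' (fst (exec M c (A' hist' r)))) as [Hcost Hvalid].
  rewrite Hcost, Hvalid; split; tauto.
Qed.

End Exec.

Definition map_move {M1 M2 : Metric_Space} (f : Base M1 -> Base M2) (mv : move M1) : move M2 :=
  let (i, x) := mv in (i, f x).

Section MapMoves.
Variables M1 M2 : Metric_Space.
Variable f : Base M1 -> Base M2.

Lemma upd_map (c : config M1) i x :
  upd M2 (fun k => f (c k)) i (f x) = (fun k => f (upd M1 c i x k)).
Proof. extensionality k; unfold upd; destruct (Nat.eqb k i); reflexivity. Qed.

Lemma exec_map_config (c : config M1) ms :
  fst (exec M2 (fun k => f (c k)) (map (map_move f) ms)) = (fun k => f (fst (exec M1 c ms) k)).
Proof.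
  revert c; induction ms as [|[i x] ms IH]; intros c; [reflexivity|].
  simpl; rewrite upd_map; apply IH.
Qed.

Lemma exec_map_cost_le (c : config M1) ms :
  (forall x y, dist M2 (f x) (f y) <= dist M1 x y) ->
  snd (exec M2 (fun k => f (c k)) (map (map_move f) ms)) <= snd (exec M1 c ms).
Proof.
  intros Hf; revert c; induction ms as [|[i x] ms IH]; intros c; simpl; [lra|].
  rewrite upd_map; specialize (IH (upd M1 c i x)); specialize (Hf (c i) x); lra.
Qed.

Lemma exec_map_cost_eq (c : config M1) ms :
  (forall x y, dist M2 (f x) (f y) = dist M1 x y) ->
  snd (exec M2 (fun k => f (c k)) (map (map_move f) ms)) = snd (exec M1 c ms).
Proof.
  intros Hf; revert c; induction ms as [|[i x] ms IH]; intros c; simpl; [lra|].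
  rewrite upd_map, IH, Hf; reflexivity.
Qed.

End MapMoves.

Section Scale.
Variable M : Metric_Space.
Variable l : R.
Hypothesis l_pos : 0 < l.

Definition scale_space : Metric_Space.
Proof.
  refine (Build_Metric_Space (Base M) (fun x y => l * dist M x y) _ _ _ _).
  - intros x y; pose proof (dist_pos M x y); nra.
  - intros x y; rewrite dist_sym; reflexivity.
  - intros x y; rewrite <- dist_refl; split; intros H.
    + apply Rmult_integral in H; destruct H; [lra|assumption].
    + rewrite H; ring.
  - intros x y z; pose proof (dist_tri M x y z); nra.
Defined.

Lemma exec_scale (c : config M) ms :
  exec scale_space c ms = (fst (exec M c ms), l * snd (exec M c ms)).
Proof.
  revert c; induction ms as [|[i x] ms IH]; intros c; simpl.
  - f_equal; ring.
  - change (upd scale_space c i x) with (upd M c i x); rewrite IH; simpl; f_equal; ring.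
Qed.

Lemma alg_valid_scale (A : online_alg M) hist c sigma :
  alg_valid_from scale_space A hist c sigma <-> alg_valid_from M A hist c sigma.
Proof.
  revert hist c; induction sigma as [|r sigma IH]; intros hist c; simpl; [tauto|].
  rewrite exec_scale, IH; reflexivity.
Qed.

Lemma alg_cost_scale (A : online_alg M) hist c sigma :
  alg_cost_from scale_space A hist c sigma = l * alg_cost_from M A hist c sigma.
Proof.
  revert hist c; induction sigma as [|r sigma IH]; intros hist c; simpl; [ring|].
  rewrite exec_scale, IH; simpl; ring.
Qed.

Lemma sched_valid_scale (c : config M) sigma S :
  sched_valid scale_space c sigma S <-> sched_valid M c sigma S.
Proof.
  revert c S; induction sigma as [|r sigma IH]; intros c [|ms S]; simpl; try tauto.
  rewrite exec_scale, IH; reflexivity.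
Qed.

Lemma sched_cost_scale (c : config M) S :
  sched_cost scale_space c S = l * sched_cost M c S.
Proof.
  revert c; induction S as [|ms S IH]; intros c; simpl; [ring|].
  rewrite exec_scale, IH; simpl; ring.
Qed.

Lemma serves_all_scale (s : Base M) (A : online_alg M) :
  serves_all scale_space s A <-> serves_all M s A.
Proof. unfold serves_all; split; intros H sigma; apply alg_valid_scale, H. Qed.

Lemma bounded_by_unscale (s : Base M) (A : online_alg M) rho cst :
  bounded_by scale_space s A rho cst -> bounded_by M s A rho (cst / l).
Proof.
  intros Hb sigma S HS.
  apply sched_valid_scale in HS; specialize (Hb sigma S HS).
  unfold alg_cost in *; rewrite alg_cost_scale in Hb.
  change (init_config scale_space s) with (init_config M s) in Hb.
  rewrite sched_cost_scale in Hb.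
  apply Rmult_le_reg_l with l; [assumption|].
  replace (l * (rho * sched_cost M (init_config M s) S + cst / l))
    with (rho * (l * sched_cost M (init_config M s) S) + cst) by (field; lra).
  exact Hb.
Qed.

End Scale.

Section Strictify.
Variable M : Metric_Space.
Variable s : Base M.
Variable Af : nat -> online_alg M.
Variable cst : nat -> R.
Variable rho : R.
Hypothesis rho_nonneg : 0 <= rho.
Hypothesis cst_small : forall eps, 0 < eps -> exists k, cst k <= eps.
Hypothesis Af_serves_all : forall k, serves_all M s (Af k).
Hypothesis Af_bounded : forall k, bounded_by M s (Af k) rho (cst k).

Fixpoint drop_source (l : list (Base M)) : list (Base M) :=
  match l with
  | [] => []
  | x :: l' => if excluded_middle_informative (x = s) then drop_source l' else l
  end.

Lemma drop_source_app_nil h l :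
  drop_source h = [] -> drop_source (h ++ l) = drop_source l.
Proof.
  induction h as [|x h IH]; simpl; [reflexivity|].
  destruct excluded_middle_informative; [assumption|discriminate].
Qed.

Lemma drop_source_app_cons h l x rest :
  drop_source h = x :: rest -> drop_source (h ++ l) = x :: rest ++ l.
Proof.
  induction h as [|y h IH]; simpl; [discriminate|].
  destruct excluded_middle_informative; [assumption|].
  intros E; injection E as -> ->; reflexivity.
Qed.

Lemma drop_source_head_neq l x rest : drop_source l = x :: rest -> x <> s.
Proof.
  induction l as [|y l IH]; simpl; [discriminate|].
  destruct excluded_middle_informative as [_|Hy]; [assumption|].
  intros E; injection E as -> _; exact Hy.
Qed.

(* The additive constant [cst k] of the chosen algorithm is paid for by the
   first request [x <> s], which every offline schedule must reach. *)
Definition index_for (x : Base M) : nat :=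
  epsilon (inhabits 0%nat) (fun k => cst k <= dist M s x).

Lemma index_for_spec x : x <> s -> cst (index_for x) <= dist M s x.
Proof.
  intros Hx; apply (epsilon_spec (inhabits 0%nat) (fun k => cst k <= dist M s x)), cst_small.
  pose proof (dist_pos M s x).
  assert (dist M s x <> 0) by (rewrite dist_refl; auto).
  lra.
Qed.

Definition strict_alg : online_alg M := fun hist r =>
  match drop_source (hist ++ [r]) with
  | [] => []
  | x :: _ => Af (index_for x) (drop_source hist) r
  end.

Lemma strict_alg_after hist x rest :
  drop_source hist = x :: rest ->
  forall h r, strict_alg (hist ++ h) r = Af (index_for x) ((x :: rest) ++ h) r.
Proof.
  intros Hh h r; unfold strict_alg.
  rewrite <- app_assoc, !(drop_source_app_cons _ _ _ _ Hh); reflexivity.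
Qed.

Lemma strict_alg_run sigma hist :
  drop_source hist = [] ->
  match drop_source sigma with
  | [] =>
      alg_cost_from M strict_alg hist (init_config M s) sigma = 0 /\
      alg_valid_from M strict_alg hist (init_config M s) sigma
  | x :: rest =>
      alg_cost_from M strict_alg hist (init_config M s) sigma =
        alg_cost_from M (Af (index_for x)) [] (init_config M s) (x :: rest) /\
      (alg_valid_from M (Af (index_for x)) [] (init_config M s) (x :: rest) ->
       alg_valid_from M strict_alg hist (init_config M s) sigma)
  end.
Proof.
  revert hist; induction sigma as [|r sigma IH]; intros hist Hh; simpl; [split; auto|].
  assert (Hhr : drop_source (hist ++ [r]) = drop_source [r]) by apply (drop_source_app_nil _ _ Hh).
  assert (Hstep : strict_alg hist r =
            match drop_source [r] with [] => [] | x :: _ => Af (index_for x) [] r end)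
    by (unfold strict_alg; rewrite Hhr, Hh; reflexivity).
  simpl in Hhr, Hstep; rewrite Hstep.
  destruct excluded_middle_informative as [->|Hr]; simpl.
  - specialize (IH (hist ++ [s]) Hhr).
    destruct (drop_source sigma) as [|x rest]; destruct IH as [Hcost Hvalid];
      rewrite Hcost; (split; [simpl; ring|]).
    + split; [exists 0%nat; reflexivity|assumption].
    + intros H; split; [exists 0%nat; reflexivity|auto].
  - destruct (alg_run_congr M _ _ _ _ (strict_alg_after (hist ++ [r]) r [] Hhr)
                (fst (exec M (init_config M s) (Af (index_for r) [] r))) sigma)
      as [Hcost Hvalid].
    rewrite Hcost, Hvalid; split; [reflexivity|tauto].
Qed.

Lemma sched_valid_drop_source sigma (c : config M) S x rest :
  sched_valid M c sigma S -> drop_source sigma = x :: rest ->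
  exists S', sched_valid M c (x :: rest) S' /\ sched_cost M c S' = sched_cost M c S.
Proof.
  revert c S; induction sigma as [|r sigma IH]; intros c [|ms S] HS Hd;
    simpl in HS, Hd; try contradiction; [discriminate|].
  destruct excluded_middle_informative as [_|_].
  - destruct (IH _ _ (proj2 HS) Hd) as [[|ms' S'] [HS' Hcost]]; [contradiction|].
    (* the moves made for the skipped requests at [s] are merged into the next step *)
    exists ((ms ++ ms') :: S'); simpl in *; rewrite exec_app; simpl.
    split; [exact HS'|rewrite <- Hcost; ring].
  - injection Hd as -> ->; exists (ms :: S); split; [exact HS|reflexivity].
Qed.

Lemma strict_alg_serves_all : serves_all M s strict_alg.
Proof.
  intros sigma; pose proof (strict_alg_run sigma [] eq_refl) as Hrun.
  destruct (drop_source sigma); [apply Hrun|apply Hrun, Af_serves_all].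
Qed.

Lemma strict_alg_bounded : bounded_by M s strict_alg (rho + 1) 0.
Proof.
  intros sigma S HS; unfold alg_cost.
  pose proof (strict_alg_run sigma [] eq_refl) as Hrun.
  pose proof (sched_cost_nonneg M (init_config M s) S) as Hopt.
  destruct (drop_source sigma) as [|x rest] eqn:Hd; destruct Hrun as [-> _]; [nra|].
  destruct (sched_valid_drop_source _ _ _ _ _ HS Hd) as [S' [HS' Hcost]].
  pose proof (Af_bounded (index_for x) _ _ HS') as Hb.
  pose proof (index_for_spec x (drop_source_head_neq _ _ _ Hd)) as Hk.
  pose proof (sched_cost_ge_first_request M s x rest S' HS') as Hfirst.
  unfold alg_cost in Hb; rewrite Hcost in Hb, Hfirst; lra.
Qed.

End Strictify.

Section Wedge.
Variable Idx : Type.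
Hypothesis Idx_inhabited : inhabited Idx.
Variable F : Idx -> Metric_Space.
Variable src : forall i, Base (F i).

(* All sources are glued into the single point [None]; the other points are
   the non-source points of the branches. *)
Definition wedge_pt : Type := option {i : Idx & {x : Base (F i) | x <> src i}}.

Definition cast_branch {i j : Idx} (e : i = j) (x : Base (F i)) : Base (F j) :=
  eq_rect i (fun k => Base (F k)) x j e.

Lemma cast_branch_refl i (e : i = i) x : cast_branch e x = x.
Proof. rewrite (proof_irrelevance _ e eq_refl); reflexivity. Qed.

Definition wedge_dist (p q : wedge_pt) : R :=
  match p, q with
  | None, None => 0
  | None, Some (existT _ j (exist _ y _)) => dist (F j) (src j) y
  | Some (existT _ i (exist _ x _)), None => dist (F i) x (src i)
  | Some (existT _ i (exist _ x _)), Some (existT _ j (exist _ y _)) =>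
      match excluded_middle_informative (i = j) with
      | left e => dist (F j) (cast_branch e x) y
      | right _ => dist (F i) x (src i) + dist (F j) (src j) y
      end
  end.

Definition height (p : wedge_pt) : R := wedge_dist None p.

Definition on_branch (i : Idx) (p : wedge_pt) : Prop :=
  match p with None => True | Some (existT _ j _) => j = i end.

Definition wedge_proj (i : Idx) (p : wedge_pt) : Base (F i) :=
  match p with
  | None => src i
  | Some (existT _ j (exist _ y _)) =>
      match excluded_middle_informative (j = i) with
      | left e => cast_branch e y
      | right _ => src i
      end
  end.

Lemma wedge_dist_on_branch i p q :
  on_branch i p -> on_branch i q -> wedge_dist p q = dist (F i) (wedge_proj i p) (wedge_proj i q).
Proof.
  destruct p as [[j [x hx]]|], q as [[k [y hy]]|]; simpl; intros Hp Hq; subst;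
    repeat (destruct excluded_middle_informative; [|contradiction]); rewrite ?cast_branch_refl;
    try reflexivity.
  symmetry; apply dist_self.
Qed.

Lemma height_on_branch i p : on_branch i p -> height p = dist (F i) (src i) (wedge_proj i p).
Proof. intros Hp; apply (wedge_dist_on_branch i); simpl; tauto. Qed.

Lemma on_branch_exists p : exists i, on_branch i p.
Proof.
  destruct p as [[j x]|]; [exists j; reflexivity|].
  pose proof Idx_inhabited as [i]; exists i; exact I.
Qed.

Lemma height_nonneg p : 0 <= height p.
Proof.
  destruct (on_branch_exists p) as [i Hi]; rewrite (height_on_branch i p Hi).
  pose proof (dist_pos (F i) (src i) (wedge_proj i p)); lra.
Qed.

Lemma wedge_proj_off_branch i q : ~ on_branch i q -> wedge_proj i q = src i.
Proof.
  destruct q as [[k [y hy]]|]; simpl; intros Hq; [|tauto].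
  destruct excluded_middle_informative; [contradiction|reflexivity].
Qed.

Lemma wedge_dist_off_branch i p q :
  on_branch i p -> ~ on_branch i q ->
  wedge_dist p q = height p + height q /\ wedge_dist q p = height q + height p.
Proof.
  destruct p as [[j [x hx]]|], q as [[k [y hy]]|]; simpl; intros Hp Hq; subst;
    try contradiction; unfold height; simpl.
  - destruct excluded_middle_informative; [subst; contradiction|].
    destruct excluded_middle_informative; [subst; contradiction|].
    rewrite (dist_sym (F i) x), (dist_sym (F k) y); split; reflexivity.
  - rewrite (dist_sym (F k) y); split; ring.
Qed.

Lemma wedge_dist_le_heights p q : wedge_dist p q <= height p + height q.
Proof.
  destruct (on_branch_exists p) as [i Hp].
  destruct (classic (on_branch i q)) as [Hq|Hq].
  - rewrite (wedge_dist_on_branch i p q Hp Hq), (height_on_branch i p Hp),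
      (height_on_branch i q Hq), (dist_sym (F i) (src i) (wedge_proj i p)).
    apply dist_tri.
  - rewrite (proj1 (wedge_dist_off_branch i p q Hp Hq)); lra.
Qed.

Lemma wedge_dist_sym p q : wedge_dist p q = wedge_dist q p.
Proof.
  destruct (on_branch_exists p) as [i Hp].
  destruct (classic (on_branch i q)) as [Hq|Hq].
  - rewrite (wedge_dist_on_branch i p q Hp Hq), (wedge_dist_on_branch i q p Hq Hp); apply dist_sym.
  - destruct (wedge_dist_off_branch i p q Hp Hq) as [-> ->]; ring.
Qed.

Lemma height_sub_le_wedge_dist p q : height q - height p <= wedge_dist p q.
Proof.
  destruct (on_branch_exists p) as [i Hp].
  destruct (classic (on_branch i q)) as [Hq|Hq].
  - rewrite (wedge_dist_on_branch i p q Hp Hq), (height_on_branch i p Hp), (height_on_branch i q Hq).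
    pose proof (dist_tri (F i) (src i) (wedge_proj i q) (wedge_proj i p)); lra.
  - rewrite (proj1 (wedge_dist_off_branch i p q Hp Hq)); pose proof (height_nonneg p); lra.
Qed.

Lemma wedge_dist_nonneg p q : wedge_dist p q >= 0.
Proof.
  pose proof (height_sub_le_wedge_dist p q); pose proof (height_sub_le_wedge_dist q p) as Hqp.
  rewrite (wedge_dist_sym q p) in Hqp; lra.
Qed.

Lemma wedge_dist_tri p q z : wedge_dist p q <= wedge_dist p z + wedge_dist z q.
Proof.
  destruct (on_branch_exists p) as [i Hp].
  pose proof (height_nonneg z).
  destruct (classic (on_branch i q)) as [Hq|Hq], (classic (on_branch i z)) as [Hz|Hz].
  - rewrite !(wedge_dist_on_branch i _ _ Hp Hq), (wedge_dist_on_branch i _ _ Hp Hz),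
      (wedge_dist_on_branch i _ _ Hz Hq).
    apply dist_tri.
  - rewrite (proj1 (wedge_dist_off_branch i p z Hp Hz)), (proj2 (wedge_dist_off_branch i q z Hq Hz)).
    pose proof (wedge_dist_le_heights p q); lra.
  - rewrite (proj1 (wedge_dist_off_branch i p q Hp Hq)).
    pose proof (height_sub_le_wedge_dist z p); rewrite (wedge_dist_sym z p) in *.
    rewrite (proj1 (wedge_dist_off_branch i z q Hz Hq)); lra.
  - rewrite (proj1 (wedge_dist_off_branch i p q Hp Hq)), (proj1 (wedge_dist_off_branch i p z Hp Hz)).
    pose proof (height_sub_le_wedge_dist z q); lra.
Qed.

Lemma wedge_proj_inj i p q :
  on_branch i p -> on_branch i q -> wedge_proj i p = wedge_proj i q -> p = q.
Proof.
  destruct p as [[j [x hx]]|], q as [[k [y hy]]|]; simpl; intros Hp Hq; subst;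
    repeat (destruct excluded_middle_informative; [|contradiction]); rewrite ?cast_branch_refl;
    intros Hxy; subst; try contradiction; try reflexivity.
  do 3 f_equal; apply proof_irrelevance.
Qed.

Lemma wedge_dist_eq0 p q : wedge_dist p q = 0 <-> p = q.
Proof.
  destruct (on_branch_exists p) as [i Hp]; split.
  - destruct (classic (on_branch i q)) as [Hq|Hq]; intros H0.
    + rewrite (wedge_dist_on_branch i p q Hp Hq), dist_refl in H0.
      exact (wedge_proj_inj i p q Hp Hq H0).
    + (* off the branch of [p], [q] is not the glued point, so has positive height *)
      rewrite (proj1 (wedge_dist_off_branch i p q Hp Hq)) in H0.
      pose proof (height_nonneg p); pose proof (height_nonneg q).
      destruct q as [[k [y hy]]|]; [|elim (Hq I)].
      assert (Hy : dist (F k) (src k) y = 0) by (change (height (Some (existT _ k (exist _ y hy))) = 0); lra).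
      elim hy; apply (dist_refl (F k)); rewrite dist_sym; exact Hy.
  - intros <-; rewrite (wedge_dist_on_branch i p p Hp Hp); apply dist_self.
Qed.

Definition Wedge : Metric_Space :=
  Build_Metric_Space wedge_pt wedge_dist wedge_dist_nonneg wedge_dist_sym wedge_dist_eq0 wedge_dist_tri.

Definition wedge_embed (i : Idx) (x : Base (F i)) : Base Wedge :=
  match excluded_middle_informative (x = src i) with
  | left _ => None
  | right n => Some (existT _ i (exist _ x n))
  end.

Lemma on_branch_embed i x : on_branch i (wedge_embed i x).
Proof. unfold wedge_embed; destruct excluded_middle_informative; simpl; auto. Qed.

Lemma wedge_proj_embed i x : wedge_proj i (wedge_embed i x) = x.
Proof.
  unfold wedge_embed; destruct excluded_middle_informative as [->|]; simpl; [reflexivity|].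
  destruct excluded_middle_informative as [e|]; [apply cast_branch_refl|contradiction].
Qed.

Lemma wedge_embed_src i : wedge_embed i (src i) = None.
Proof. unfold wedge_embed; destruct excluded_middle_informative; [reflexivity|contradiction]. Qed.

Lemma wedge_embed_isometry i x y : dist Wedge (wedge_embed i x) (wedge_embed i y) = dist (F i) x y.
Proof.
  simpl; rewrite (wedge_dist_on_branch i _ _ (on_branch_embed i x) (on_branch_embed i y)).
  rewrite !wedge_proj_embed; reflexivity.
Qed.

Lemma wedge_proj_lipschitz i p q : dist (F i) (wedge_proj i p) (wedge_proj i q) <= dist Wedge p q.
Proof.
  simpl.
  destruct (classic (on_branch i p)) as [Hp|Hp], (classic (on_branch i q)) as [Hq|Hq].
  - rewrite (wedge_dist_on_branch i p q Hp Hq); lra.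
  - rewrite (proj1 (wedge_dist_off_branch i p q Hp Hq)), (wedge_proj_off_branch i q Hq),
      (height_on_branch i p Hp), dist_sym.
    pose proof (height_nonneg q); lra.
  - rewrite (proj2 (wedge_dist_off_branch i q p Hq Hp)), (wedge_proj_off_branch i p Hp),
      (height_on_branch i q Hq).
    pose proof (height_nonneg p); lra.
  - rewrite (wedge_proj_off_branch i p Hp), (wedge_proj_off_branch i q Hq), dist_self.
    pose proof (wedge_dist_nonneg p q); lra.
Qed.

Definition restrict_alg (A : online_alg Wedge) (i : Idx) : online_alg (F i) := fun hist r =>
  map (@map_move Wedge (F i) (wedge_proj i)) (A (map (wedge_embed i) hist) (wedge_embed i r)).

Lemma restrict_alg_run (A : online_alg Wedge) i sigma hist (c : config Wedge) :
  alg_cost_from (F i) (restrict_alg A i) hist (fun k => wedge_proj i (c k)) sigma <=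
    alg_cost_from Wedge A (map (wedge_embed i) hist) c (map (wedge_embed i) sigma) /\
  (alg_valid_from Wedge A (map (wedge_embed i) hist) c (map (wedge_embed i) sigma) ->
   alg_valid_from (F i) (restrict_alg A i) hist (fun k => wedge_proj i (c k)) sigma).
Proof.
  revert hist c; induction sigma as [|r sigma IH]; intros hist c; simpl; [split; [lra|tauto]|].
  assert (Hstep : restrict_alg A i hist r =
            map (@map_move Wedge (F i) (wedge_proj i)) (A (map (wedge_embed i) hist) (wedge_embed i r)))
    by reflexivity.
  rewrite Hstep, (exec_map_config Wedge (F i) (wedge_proj i)).
  pose proof (exec_map_cost_le Wedge (F i) (wedge_proj i) c
                (A (map (wedge_embed i) hist) (wedge_embed i r)) (wedge_proj_lipschitz i)).
  destruct (IH (hist ++ [r]) (fst (exec Wedge c (A (map (wedge_embed i) hist) (wedge_embed i r)))))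
    as [Hcost Hvalid].
  rewrite map_app in Hcost, Hvalid; cbn [map] in Hcost, Hvalid.
  split; [apply Rplus_le_compat; assumption|].
  intros [[j Hj] Hv]; split; [exists j|auto].
  transitivity (wedge_proj i (wedge_embed i r)); [f_equal; exact Hj|apply wedge_proj_embed].
Qed.

Lemma sched_embed i sigma (c : config (F i)) S :
  sched_valid (F i) c sigma S ->
  let S' := map (map (@map_move (F i) Wedge (wedge_embed i))) S in
  sched_valid Wedge (fun k => wedge_embed i (c k)) (map (wedge_embed i) sigma) S' /\
  sched_cost Wedge (fun k => wedge_embed i (c k)) S' = sched_cost (F i) c S.
Proof.
  revert c S; induction sigma as [|r sigma IH]; intros c [|ms S]; simpl; try tauto.
  intros [[j Hj] HS].
  rewrite (exec_map_config (F i) Wedge (wedge_embed i)),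
    (exec_map_cost_eq (F i) Wedge (wedge_embed i) c ms (wedge_embed_isometry i)).
  destruct (IH _ _ HS) as [HS' Hcost].
  split; [split; [exists j; rewrite Hj; reflexivity|exact HS']|rewrite Hcost; reflexivity].
Qed.

(* The glued point projects to the source of every branch, so the initial
   configurations correspond by conversion. *)
Lemma restrict_alg_serves_all (A : online_alg Wedge) i :
  serves_all Wedge None A -> serves_all (F i) (src i) (restrict_alg A i).
Proof. intros HA sigma; exact (proj2 (restrict_alg_run A i sigma [] _) (HA _)). Qed.

Lemma restrict_alg_bounded (A : online_alg Wedge) i rho cst :
  bounded_by Wedge None A rho cst -> bounded_by (F i) (src i) (restrict_alg A i) rho cst.
Proof.
  intros Hb sigma S HS.
  assert (Hinit : (fun k => wedge_embed i (init_config (F i) (src i) k)) = init_config Wedge None)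
    by (extensionality k; apply wedge_embed_src).
  destruct (sched_embed i sigma _ S HS) as [HS' Hcost]; rewrite Hinit in HS', Hcost.
  eapply Rle_trans; [exact (proj1 (restrict_alg_run A i sigma [] (init_config Wedge None)))|].
  rewrite <- Hcost; apply Hb, HS'.
Qed.

End Wedge.

Lemma INR_succ_pos (k : nat) : 0 < INR k + 1.
Proof. pose proof (pos_INR k); lra. Qed.

Lemma div_INR_succ_small (cst eps : R) : 0 < eps -> exists k, cst / (INR k + 1) <= eps.
Proof.
  intros Heps; destruct (INR_unbounded (Rabs cst / eps)) as [k Hk]; exists k.
  pose proof (INR_succ_pos k); pose proof (Rle_abs cst).
  apply Rmult_le_reg_r with (INR k + 1); [assumption|].
  unfold Rdiv; rewrite Rmult_assoc, Rinv_l by lra.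
  apply Rmult_gt_compat_r with (r := eps) in Hk; [|assumption].
  unfold Rdiv in Hk; rewrite Rmult_assoc, Rinv_l in Hk by lra; nra.
Qed.

Lemma strict_from_scaled_copies (M : Metric_Space) (s : Base M) (Af : nat -> online_alg M) rho cst :
  0 <= rho ->
  (forall k, let Mk := scale_space M (INR k + 1) (INR_succ_pos k) in
     serves_all Mk s (Af k) /\ bounded_by Mk s (Af k) rho cst) ->
  exists B, serves_all M s B /\ bounded_by M s B (rho + 1) 0.
Proof.
  intros Hrho HAf.
  exists (strict_alg M s Af (fun k => cst / (INR k + 1))); split.
  - apply strict_alg_serves_all; intros k.
    apply (serves_all_scale M (INR k + 1) (INR_succ_pos k)), HAf.
  - apply strict_alg_bounded; [assumption|apply div_INR_succ_small|].
    intros k; apply (bounded_by_unscale M (INR k + 1) (INR_succ_pos k)), HAf.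
Qed.

Definition strictly_solvable (rho : R) (M : Metric_Space) (s : Base M) : Prop :=
  exists A : online_alg M, serves_all M s A /\ strictly_rho_competitive M s A rho.

Lemma not_uniform_bad_spaces :
  ~ (exists rho, 1 <= rho /\ forall M s, strictly_solvable rho M s) ->
  exists Ms : nat -> {M : Metric_Space & Base M},
    forall n, ~ strictly_solvable (INR n + 1) (projT1 (Ms n)) (projT2 (Ms n)).
Proof.
  intros Hno.
  assert (Hbad : forall n : nat, exists Ms : {M : Metric_Space & Base M},
             ~ strictly_solvable (INR n + 1) (projT1 Ms) (projT2 Ms)).
  { intros n; apply NNPP; intros Hall; apply Hno; exists (INR n + 1).
    split; [pose proof (pos_INR n); lra|].
    intros M s; apply NNPP; intros Hs; apply Hall; exists (existT _ M s); exact Hs. }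
  exists (fun n => proj1_sig (constructive_indefinite_description _ (Hbad n))).
  intros n; exact (proj2_sig (constructive_indefinite_description _ (Hbad n))).
Qed.

Theorem proposition1 :
  (forall (M : Metric_Space) (s : Base M),
      exists A : online_alg M, serves_all M s A /\ competitive M s A) ->
  exists rho : R, 1 <= rho /\
    forall (M : Metric_Space) (s : Base M),
      exists A : online_alg M, serves_all M s A /\ strictly_rho_competitive M s A rho.
Proof.
  intros Hcomp; apply NNPP; intros Hno.
  destruct (not_uniform_bad_spaces Hno) as [Ms Hbad].
  set (F := fun p : nat * nat =>
              scale_space (projT1 (Ms (fst p))) (INR (snd p) + 1) (INR_succ_pos (snd p))).
  set (src := fun p : nat * nat => projT2 (Ms (fst p)) : Base (F p)).
  set (W := Wedge (nat * nat) (inhabits (0, 0)%nat) F src).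
  destruct (Hcomp W None) as [A [HA [rho [Hrho [cst Hb]]]]].
  destruct (INR_unbounded rho) as [n Hn].
  set (Af := fun k => restrict_alg _ _ F src A (n, k) : online_alg (projT1 (Ms n))).
  destruct (strict_from_scaled_copies (projT1 (Ms n)) (projT2 (Ms n)) Af rho cst) as [B [HB1 HB2]].
  - lra.
  - intros k; split.
    + exact (restrict_alg_serves_all _ _ F src A (n, k) HA).
    + exact (restrict_alg_bounded _ _ F src A (n, k) rho cst Hb).
  - apply (Hbad n); exists B; split; [exact HB1|split].
    + pose proof (pos_INR n); lra.
    + apply (bounded_by_mono _ _ _ (rho + 1)); [lra|exact HB2].
Qed.
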